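(* Let $n_{k'}\le n_k$. The restriction of $Z_{k,k'}$ to $\operatorname{ran}(Z_{k,k'}^*Z_{k,k'})$, and the restriction of $Z_{k,k'}^*$ to $E_{k'}$, are isometric isomorphisms between the subspaces $\operatorname{ran}(Z_{k,k'}^*Z_{k,k'})\subset E_k$ and $E_{k'}$ (in the respective directions).
   Context: Let $\mathcal H$ be a finite-dimensional complex Hilbert space and $E_k,E_{k'}$ mutually orthogonal subspaces with $n_k=\dim E_k$, $n_{k'}=\dim E_{k'}$ and orthonormal bases $\{|a_k\rangle:0\le a\le n_k-1\}$, $\{|b_{k'}\rangle:0\le b\le n_{k'}-1\}$. For vectors $x,y$, $|x\rangle\langle y|$ is the operator $u\mapsto\langle y,u\rangle x$. $\zeta_k=e^{2\pi i/n_k}$. The transition operator is $Z_{k,k'}=n_k^{-1/2}\sum_{b=0}^{n_{k'}-1}\sum_{a=0}^{n_k-1}\zeta_k^{ba}|b_{k'}\rangle\langle a_k|$ (an operator on $\mathcal H$). *)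

From HB Require Import structures.
From mathcomp Require Import all_boot all_order all_algebra.
From mathcomp Require Import reals trigo.
From mathcomp.real_closed Require Import complex.
Set Implicit Arguments. Unset Strict Implicit. Unset Printing Implicit Defensive.
Import Order.TTheory GRing.Theory Num.Theory.
Local Open Scope ring_scope.

(* The Hilbert space H is modelled as C^d (column vectors), C = R[i]. *)

Definition dotc (R : realType) (d : nat) (y u : 'cV[R[i]]_d) : R[i] :=
  \sum_(i < d) (y i 0)^* * u i 0.

(* the operator |x><y| : u |-> <y,u> x, as a d x d matrix *)
Definition ketbra (R : realType) (d : nat) (x y : 'cV[R[i]]_d) : 'M[R[i]]_d :=
  x *m (map_mx Num.conj y)^T.

Definition adjc (R : realType) (d : nat) (A : 'M[R[i]]_d) : 'M[R[i]]_d :=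
  (map_mx Num.conj A)^T.

Definition zeta (R : realType) (n : nat) : R[i] :=
  Complex (cos (2 * pi / n%:R)) (sin (2 * pi / n%:R)).

Definition Zop (R : realType) (d nk nk' : nat)
  (a : 'I_nk -> 'cV[R[i]]_d) (b : 'I_nk' -> 'cV[R[i]]_d) : 'M[R[i]]_d :=
  Complex ((Num.sqrt (nk%:R : R))^-1) 0 *:
    \sum_(j < nk') \sum_(i < nk) zeta R nk ^+ (j * i) *: ketbra (b j) (a i).

Definition orthonormal_fam (R : realType) (d m : nat) (e : 'I_m -> 'cV[R[i]]_d) :=
  forall i j, dotc (e i) (e j) = (i == j)%:R.

Definition in_span (R : realType) (d m : nat) (e : 'I_m -> 'cV[R[i]]_d)
  (x : 'cV[R[i]]_d) := exists c : 'I_m -> R[i], x = \sum_(i < m) c i *: e i.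

Definition in_ran (R : realType) (d : nat) (A : 'M[R[i]]_d) (x : 'cV[R[i]]_d) :=
  exists y, x = A *m y.

Definition isometric_iso (R : realType) (d : nat) (T : 'M[R[i]]_d)
  (P Q : 'cV[R[i]]_d -> Prop) :=
  [/\ forall x, P x -> Q (T *m x),
      forall x, P x -> dotc (T *m x) (T *m x) = dotc x x,
      forall x y, P x -> P y -> T *m x = T *m y -> x = y &
      forall y, Q y -> exists2 x, P x & T *m x = y].

From mathcomp Require Import all_boot all_order all_algebra.
From mathcomp Require Import reals trigo.
From mathcomp.real_closed Require Import complex.
From mathcomp Require Import ring lra.
Set Implicit Arguments. Unset Strict Implicit. Unset Printing Implicit Defensive.
Import Order.TTheory GRing.Theory Num.Theory.
Local Open Scope ring_scope.
Local Open Scope sesquilinear_scope.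

(** Write the families as matrices [A], [B] with orthonormal columns. Then
    [Z = B F A^*], where [F] is the top [n_k' x n_k] block of the normalised
    Fourier matrix of order [n_k]; by orthogonality of the characters of
    [Z/n_k], the rows of [F] are orthonormal as soon as [n_k' <= n_k]. Hence
    [Z Z^* B = B], i.e. [Z] is a partial isometry with final space [E_k'],
    and [Z^* Z] is the identity on its initial space [ran (Z^* Z)]. On these
    two spaces [Z] and [Z^*] are mutually inverse and adjoint to each other,
    hence isometric isomorphisms. *)

Lemma sum_expr_unity_root (F : idomainType) n (u : F) :
  u ^+ n = 1 -> u != 1 -> \sum_(i < n) u ^+ i = 0.
Proof.
move=> un1 u_neq1; have /eqP := subrX1 u n.
by rewrite un1 subrr eq_sym mulf_eq0 subr_eq0 (negbTE u_neq1) => /eqP.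
Qed.

Lemma unity_root_conjM (C : numClosedFieldType) n (z : C) :
  (0 < n)%N -> z ^+ n = 1 -> z^* * z = 1.
Proof.
move=> n_gt0 zn1; have /eqP : `|z| ^+ n = 1 by rewrite -normrX zn1 normr1.
by rewrite pexpr_eq1 // -normCKC => /eqP ->; rewrite expr1n.
Qed.

Lemma prim_root_char_orthogonal (C : numClosedFieldType) n (z : C) j j' :
  n.-primitive_root z -> (j < n)%N -> (j' < n)%N ->
  \sum_(i < n) z ^+ (j * i) * (z ^+ (j' * i))^* = (j == j')%:R * n%:R.
Proof.
move=> prim_z lt_j_n lt_j'_n; have n_gt0 := prim_order_gt0 prim_z.
have zn1 := prim_expr_order prim_z.
have conjXK k : (z ^+ k)^* * z ^+ k = 1.
  by rewrite rmorphXn -exprMn (unity_root_conjM n_gt0 zn1) expr1n.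
pose u := z ^+ j * (z ^+ j')^*.
rewrite (eq_bigr (fun i : 'I_n => u ^+ i)); last first.
  by move=> i _; rewrite exprMn !exprM rmorphXn.
have [eq_jj'|neq_jj'] := eqVneq j j'.
  rewrite mul1r /u eq_jj' mulrC conjXK.
  by under eq_bigr do rewrite expr1n; rewrite sumr_const card_ord.
rewrite mul0r sum_expr_unity_root //.
  rewrite exprMn -rmorphXn -!exprM mulnC exprM zn1 mulnC exprM zn1.
  by rewrite !expr1n rmorph1 mulr1.
apply: contra neq_jj' => /eqP u1.
have : z ^+ j = z ^+ j' by rewrite -[LHS]mulr1 -(conjXK j') mulrA -/u u1 mul1r.
by move/eqP; rewrite (eq_prim_root_expr prim_z) !modn_small.
Qed.

Section Zeta.
Variable R : realType.

Lemma demoivre (t : R) m :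
  (Complex (cos t) (sin t) : R[i]) ^+ m = Complex (cos (t *+ m)) (sin (t *+ m)).
Proof.
elim: m => [|m IHm]; first by rewrite expr0 !mulr0n cos0 sin0.
by rewrite exprS IHm mulrS cosD sinD; congr Complex; ring.
Qed.

Lemma zetaX n m : zeta R n ^+ m =
  Complex (cos ((2 * pi / n%:R) *+ m)) (sin ((2 * pi / n%:R) *+ m)).
Proof. exact: demoivre. Qed.

Lemma zetaX_neq1 n m : (0 < m < n)%N -> zeta R n ^+ m != 1.
Proof.
case/andP=> m_gt0 lt_m_n; rewrite zetaX; apply/negP => /eqP[cos_eq1 _].
pose t : R := pi * m%:R / n%:R.
have t2E : (2 * pi / n%:R) *+ m = t *+ 2.
  by rewrite -[LHS]mulr_natr -[RHS]mulr_natr /t; ring.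
have t_in : 0 < t < pi.
  rewrite divr_gt0 ?mulr_gt0 ?pi_gt0 ?ltr0n ?(leq_ltn_trans _ lt_m_n) //=.
  by rewrite ltr_pdivrMr ?ltr0n ?(leq_ltn_trans _ lt_m_n) // ltr_pM2l ?pi_gt0 ?ltr_nat.
have sin_gt0 := sin_gt0_pi t_in.
move: cos_eq1; rewrite t2E cos_mulr2n cos2sin2 => sin_eq0.
have s0 : sin t ^+ 2 = 0 by move: sin_eq0; rewrite mulr2n; lra.
by move: (exprn_gt0 2 sin_gt0); rewrite s0 ltxx.
Qed.

Lemma zeta_prim_root n : (0 < n)%N -> n.-primitive_root (zeta R n).
Proof.
move=> n_gt0; have zeta_n : zeta R n ^+ n = 1.
  by rewrite zetaX -mulr_natr divfK ?pnatr_eq0 -?lt0n // mulr_natl cos2pi sin2pi.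
have [m prim_m m_dvd_n] := prim_order_exists n_gt0 zeta_n.
suff eq_mn : m = n by rewrite eq_mn in prim_m.
apply/eqP; rewrite eqn_leq dvdn_leq //= leqNgt; apply/negP => lt_m_n.
have := zetaX_neq1 (n := n) (m := m).
by rewrite (prim_order_gt0 prim_m) lt_m_n (prim_expr_order prim_m) eqxx => /(_ isT).
Qed.

End Zeta.

Lemma trmxC_mul (C : numClosedFieldType) m n p
    (A : 'M[C]_(m, n)) (B : 'M_(n, p)) :
  (A *m B) ^t* = B ^t* *m A ^t*.
Proof. by rewrite trmx_mul map_mxM. Qed.

Section Adjoint.
Variables (R : realType) (d : nat).
Implicit Types (A : 'M[R[i]]_d) (x y : 'cV[R[i]]_d).

Lemma adjcE A : adjc A = A ^t*.
Proof. exact: map_trmx. Qed.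

Lemma adjcK A : adjc (adjc A) = A.
Proof. by rewrite !adjcE trmxCK. Qed.

Lemma dotcE x y : dotc x y = (x ^t* *m y) 0 0.
Proof. by rewrite mxE; apply: eq_bigr => r _; rewrite !mxE. Qed.

Lemma dotc_adjc A x y : dotc (A *m x) y = dotc x (adjc A *m y).
Proof. by rewrite !dotcE adjcE trmxC_mul mulmxA. Qed.

End Adjoint.

Section Families.
Variables (R : realType) (d m : nat).
Implicit Type e : 'I_m -> 'cV[R[i]]_d.

Definition family_mx e : 'M[R[i]]_(d, m) := \matrix_(r, j) e j r 0.

Lemma in_spanE e x : in_span e x <-> exists v, x = family_mx e *m v.
Proof.
have mulE (c : 'I_m -> R[i]) :
    \sum_(j < m) c j *: e j = family_mx e *m \col_j c j.
  apply/matrixP => r s; rewrite !mxE summxE.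
  by apply: eq_bigr => j _; rewrite !mxE (ord1 s) mulrC.
split=> [[c ->]|[v ->]]; first by exists (\col_j c j).
exists (fun j => v j 0); rewrite mulE; congr (_ *m _).
by apply/matrixP => j s; rewrite mxE (ord1 s).
Qed.

Lemma orthonormal_fam_unitary e :
  orthonormal_fam e -> (family_mx e) ^t* \is unitarymx.
Proof.
move=> ortho_e; apply/unitarymxP/matrixP => i j.
rewrite trmxCK !mxE -ortho_e dotcE mxE.
by apply: eq_bigr => r _; rewrite !mxE.
Qed.

End Families.

Section Fourier.
Variable R : realType.

Definition fourier_scale (n : nat) : R[i] := Complex (Num.sqrt (n%:R : R))^-1 0.

Lemma mul_fourier_scale_conj n :
  (0 < n)%N -> fourier_scale n * (fourier_scale n)^* * n%:R = 1.
Proof.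
move=> n_gt0; pose s : R := (Num.sqrt (n%:R : R))^-1.
have -> : fourier_scale n * (fourier_scale n)^* = real_complex R (s * s).
  by congr Complex; rewrite /= /s; ring.
rewrite -(rmorph_nat (real_complex R)) -rmorphM /s -invfM -expr2 sqr_sqrtr ?ler0n //.
by rewrite mulVf ?pnatr_eq0 -?lt0n.
Qed.

Definition fourier_mx m n : 'M[R[i]]_(m, n) :=
  \matrix_(j, i) (fourier_scale n * zeta R n ^+ (j * i)).

Lemma fourier_mx_unitary m n : (m <= n)%N -> fourier_mx m n \is unitarymx.
Proof.
move=> le_mn; apply/unitarymxP/matrixP => j j'.
have n_gt0 : (0 < n)%N by apply: leq_trans le_mn; apply: leq_ltn_trans (ltn_ord j).
transitivity (fourier_scale n * (fourier_scale n)^* *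
  \sum_(i < n) zeta R n ^+ (j * i) * (zeta R n ^+ (j' * i))^*).
  rewrite !mxE mulr_sumr; apply: eq_bigr => i _; rewrite !mxE rmorphM; ring.
rewrite prim_root_char_orthogonal ?zeta_prim_root ?(leq_trans (ltn_ord _) le_mn) //.
by rewrite mulrCA mul_fourier_scale_conj // mulr1 !mxE (inj_eq val_inj).
Qed.

End Fourier.

Lemma Zop_factor (R : realType) d nk nk'
    (a : 'I_nk -> 'cV[R[i]]_d) (b : 'I_nk' -> 'cV[R[i]]_d) :
  Zop a b = family_mx b *m fourier_mx R nk' nk *m (family_mx a) ^t*.
Proof.
apply/matrixP => r s; rewrite /Zop !mxE summxE.
transitivity (\sum_(j < nk') \sum_(i < nk)
   fourier_scale R nk * zeta R nk ^+ (j * i) * (b j r 0 * (a i s 0)^*)).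
  rewrite mulr_sumr; apply: eq_bigr => j _; rewrite summxE mulr_sumr.
  by apply: eq_bigr => i _; rewrite !mxE big_ord1 !mxE mulrA.
rewrite exchange_big; apply: eq_bigr => i _; rewrite !mxE mulr_suml.
by apply: eq_bigr => j _; rewrite !mxE; ring.
Qed.

Lemma mulmx_partial_isometryK (C : numClosedFieldType) p m n
    (B : 'M[C]_(p, m)) (U : 'M[C]_(m, n)) :
  B ^t* \is unitarymx -> U \is unitarymx -> B *m U *m (B *m U) ^t* *m B = B.
Proof.
move=> /unitarymxP; rewrite trmxCK => B'B U_unitary.
by rewrite trmxC_mul mulmxA mulmxtVK // -mulmxA B'B mulmx1.
Qed.

Section PartialIsometry.
Variables (R : realType) (d : nat).
Implicit Types (P Q : 'cV[R[i]]_d -> Prop).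

Lemma isometric_iso_adjc (T : 'M[R[i]]_d) P Q :
  (forall x, P x -> Q (T *m x)) -> (forall y, Q y -> P (adjc T *m y)) ->
  (forall x, P x -> adjc T *m (T *m x) = x) ->
  (forall y, Q y -> T *m (adjc T *m y) = y) ->
  isometric_iso T P Q.
Proof.
move=> TPQ T'QP T'TK TT'K; split=> //.
- by move=> x Px; rewrite dotc_adjc T'TK.
- by move=> x y Px Py eqT; rewrite -(T'TK x) // -(T'TK y) // eqT.
- by move=> y Qy; exists (adjc T *m y); [exact: T'QP | exact: TT'K].
Qed.

Variables (Z : 'M[R[i]]_d) (Q : 'cV[R[i]]_d -> Prop).
Hypothesis ranZ : forall x, Q (Z *m x).
Hypothesis ZZ'K : forall y, Q y -> Z *m (adjc Z *m y) = y.
Let S := in_ran (adjc Z *m Z).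

Lemma initial_space_adjc y : Q y -> S (adjc Z *m y).
Proof. by move=> Qy; exists (adjc Z *m y); rewrite -mulmxA ZZ'K. Qed.

Lemma adjc_mulK_initial x : S x -> adjc Z *m (Z *m x) = x.
Proof. by move=> [v ->]; rewrite -!mulmxA ZZ'K. Qed.

Lemma partial_isometry_iso : isometric_iso Z S Q /\ isometric_iso (adjc Z) Q S.
Proof.
split; apply: isometric_iso_adjc; rewrite ?adjcK.
- by move=> x _; apply: ranZ.
- exact: initial_space_adjc.
- exact: adjc_mulK_initial.
- exact: ZZ'K.
- exact: initial_space_adjc.
- by move=> x _; apply: ranZ.
- exact: ZZ'K.
- exact: adjc_mulK_initial.
Qed.

End PartialIsometry.

Theorem proposition2p6 (R : realType) (d nk nk' : nat)
  (a : 'I_nk -> 'cV[R[i]]_d) (b : 'I_nk' -> 'cV[R[i]]_d) :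
  orthonormal_fam a -> orthonormal_fam b ->
  (forall i j, dotc (a i) (b j) = 0) ->
  (nk' <= nk)%N ->
  let Z := Zop a b in
  let S := in_ran (adjc Z *m Z) in
  (forall x, S x -> in_span a x) /\
  isometric_iso Z S (in_span b) /\
  isometric_iso (adjc Z) (in_span b) S.
Proof.
move=> ortho_a ortho_b _ le_nk'_nk Z S.
pose A := family_mx a; pose B := family_mx b; pose F := fourier_mx R nk' nk.
have ZE : Z = B *m (F *m A ^t*) by rewrite /Z Zop_factor mulmxA.
have ranZ x : in_span b (Z *m x).
  by apply/in_spanE; exists (F *m A ^t* *m x); rewrite ZE !mulmxA.
have ranZ' y : in_span a (adjc Z *m y).
  apply/in_spanE; exists (F ^t* *m B ^t* *m y).
  by rewrite adjcE ZE !trmxC_mul trmxCK !mulmxA.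
have ZZ'K y : in_span b y -> Z *m (adjc Z *m y) = y.
  move=> /in_spanE[v ->]; rewrite adjcE !mulmxA ZE mulmx_partial_isometryK //.
    exact: orthonormal_fam_unitary.
  by rewrite mul_unitarymx ?fourier_mx_unitary ?orthonormal_fam_unitary.
split; last exact: partial_isometry_iso.
by move=> _ [v ->]; rewrite -mulmxA; apply: ranZ'.
Qed.
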